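(* In the Ditto protocol described in the context, let $B,B'$ both be endorsed f-blocks of the same view, or both be certified blocks of the same view. If the round number of $B$ equals the round number of $B'$, then $B=B'$.
   Context: System model: $n=3f+1$ replicas, at most $f$ Byzantine, the rest honest; reliable authenticated channels with eventual delivery of messages between honest replicas (asynchronous network); an ideal threshold signature scheme in which shares on the same message from $t$ distinct replicas combine into one threshold signature. Ditto protocol. Each round $r$ has a designated leader $L_r$. Ranks $(v,r)$ (view, round) are compared lexicographically. A regular block is $B=(id,qc,qc_{coin},r,v,txn)$, where $qc$ certifies the parent block, $qc_{coin}$ is a coin-QC or $\bot$, $r$ is the round, $v$ the view, $txn$ a batch of transactions, and $id$ a hash of the other fields. A (regular) QC for $B$ is a threshold signature on $(B.id,B.r,B.v)$ combined from $2f+1$ shares (votes); its rank is $(B.v,B.r)$; a regular block is certified if it has a QC. A fallback block (f-block) is $\bar B=(B,h,i)$ with height $h\in\{1,2\}$ and proposer $i$; an f-QC for it is a threshold signature on $(id,r,v,h,i)$ from $2f+1$ shares. A coin-QC of view $v$ is the unique threshold signature on the hash of $v$ combined from $f+1$ coin shares; it elects a leader $L\in\{1,\dots,n\}$, each with probability $1/n$. An f-QC (and its f-block) of view $v$ by proposer $L$ is endorsed if an f-QC for it exists and a coin-QC of view $v$ elects $L$; endorsed f-QCs are handled as regular QCs in Lock, Commit and Advance Round, and rank higher than any regular QC of the same view. A timeout message is a share on $v_{cur}$ together with the sender's $qc_{high}$; $2f+1$ of them for view $v$ form an f-TC of view $v$. A block or f-block $B'$ extends $B$ if $B$ is an ancestor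 of $B'$ via a chain of QCs or endorsed f-QCs (every block extends itself). Each replica keeps $r_{vote}=0$, current round $r_{cur}$, current view $v_{cur}=0$, $qc_{high}$ (initially the genesis QC), a flag $mode=false$, and during a fallback, for each replica $j$, $fvotedround[j]$ and $fvotedheight[j]$. Steady state. Propose: upon entering round $r$, $L_r$ multicasts $B=(id,qc_{high},qc_{coin},r,v_{cur},txn)$, with $qc_{coin}$ the coin-QC of view $v_{cur}-1$ if $B$ is its first proposal in view $v_{cur}$, else $\bot$. Vote: upon the first valid proposal $B=(id,qc,qc_{coin},r,v,txn)$ from $L_r$, execute Exit Fallback if $qc_{coin}\neq\bot$, otherwise Advance Round, Lock, Commit; then if $r=r_{cur}$, $v=v_{cur}$, $r>r_{vote}$, $r=qc.r+1$, rank$(qc)\ge$ rank$(qc_{high})$ and $mode=false$, send a share on $(id,r,v)$ to $L_{r+1}$ and set $r_{vote}\gets r$. Lock: upon seeing a valid QC $qc$, set $qc_{high}\gets\max(qc_{high},qc)$ by rank. Commit: whenever there are two adjacent blocks $B,B'$ ($B$ the parent of $B'$) in the chain with the same view number, each a certified regular block or an endorsed f-block, commit $B$ and all its ancestors. Advance Round: upon a valid $qc$, $r_{cur}\gets\max(r_{cur},qc.r+1)$. Timer: upon entering a new round or view reset a timer; on expiry set $mode\gets true$ and multicast a timeout message; upon a valid timeout message run Advance Round, Lock, Commit. Asynchronous fallback. Enter Fallback: upon receiving or forming an f-TC of view $v\ge v_{cur}$, set $mode\gets true$, $v_{cur}\gets v$, $fvotedround[j]\gets0$, $fvotedheight[j]\gets0$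 for all $j$, and multicast the f-TC and a height-1 f-block $(id,qc_{high},qc_{high}.r+1,v_{cur},txn,1,i)$. Fallback Vote: upon an f-block of height $h$, round $r$, view $v$ from replica $j$, if $h>fvotedheight[j]$, $mode=true$, and either ($h=1$, its QC $qc$ satisfies rank$(qc)\ge$ rank$(qc_{high})$, $r=qc.r+1$, $v=v_{cur}$) or ($h=2$, it contains a valid f-QC $\bar{qc}$, $v=v_{cur}$, $r=\bar{qc}.r+1$, $r>fvotedround[j]$, $h=\bar{qc}.height+1$), set $fvotedround[j]\gets r$, $fvotedheight[j]\gets h$ and send a share on $(id,r,v,h,j)$ to $j$. Fallback Propose: upon the first height-$h$ f-block (by any $j$) being certified by some f-QC while $mode=true$: if $h=2$ multicast that f-QC; if $h=1$ multicast a height-2 f-block containing that f-QC with round one larger. Leader Election: upon $2f+1$ valid height-2 view-$v_{cur}$ f-QCs by distinct proposers and $mode=true$, multicast a coin share for $v_{cur}$. Exit Fallback: upon receiving a coin-QC of view $\ge v_{cur}$ or $f+1$ coin shares forming one, multicast it; with $L$ the elected leader, if $mode=true$ set $r_{vote}\gets fvotedround[L]$; set $mode\gets false$, $v_{cur}\gets qc_{coin}.v+1$; execute Advance Round, Lock, Commit. *)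

(* An abstract operational model of the Ditto protocol
   (safety-relevant part), following the paper's rules. *)
From Stdlib Require Import Arith List Bool.
Import ListNotations.

(* A QC is a threshold signature; we represent it by the payload it signs.
   Replicas are identified by naturals i < n. *)
Inductive QC : Type :=
  | QCgen
  | QCreg (id r v : nat)
  | QCf (id r v h i : nat).

(* A regular block B = (id, qc, qc_coin, r, v, txn); the id is
   [hash B] (a hash of the remaining fields). [bcoin = Some c] means
   qc_coin is the coin-QC of view c, [None] means qc_coin = bot. *)
Record Block : Type := mkBlock {
  bqc : QC; bcoin : option nat; bround : nat; bview : nat; btxn : nat }.

Record FBlock : Type := mkFBlock { fblk : Block; fheight : nat; fprop : nat }.

(* Messages on which signature shares are produced. *)
Inductive Payload : Type :=
  | PVote (id r v : nat)
  | PFVote (id r v h j : nat)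
  | PTimeout (v : nat)
  | PCoin (v : nat).

(* Messages sent by honest replicas whose content matters
   (the sender is recorded separately, channels are authenticated). *)
Inductive Msg : Type :=
  | MProp (B : Block)
  | MFBlk (B : Block) (h : nat).  (* f-block (B, h, sender) *)

Definition qround (q : QC) : nat :=
  match q with QCgen => 0 | QCreg _ r _ => r | QCf _ r _ _ _ => r end.
Definition qview (q : QC) : nat :=
  match q with QCgen => 0 | QCreg _ _ v => v | QCf _ _ v _ _ => v end.
(* endorsed f-QCs rank higher than any regular QC of the same view *)
Definition qflag (q : QC) : nat :=
  match q with QCf _ _ _ _ _ => 1 | _ => 0 end.

Definition rank_lt (a b : QC) : bool :=
  (qview a <? qview b) ||
  ((qview a =? qview b) &&
   ((qflag a <? qflag b) || ((qflag a =? qflag b) && (qround a <? qround b)))).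
Definition rank_le (a b : QC) : bool := negb (rank_lt b a).

Record Params : Type := mkParams {
  n : nat;
  f : nat;
  honest : nat -> bool;
  leader : nat -> nat;
  elect : nat -> nat;           (* leader elected by the (unique) coin-QC of view v *)
  hash : Block -> nat
}.

Record LState : Type := mkL {
  r_vote : nat; r_cur : nat; v_cur : nat; qc_high : QC; mode : bool;
  fvround : nat -> nat; fvheight : nat -> nat;
  fb_last : option nat;          (* view of the last fallback entered *)
  fprop2 : bool;                 (* height-2 f-block already proposed in this fallback *)
  lastpropview : option nat
}.

Record GState : Type := mkG {
  loc : nat -> LState;                 (* local states (meaningful for honest ids) *)
  signed : nat -> Payload -> Prop;     (* shares produced so far by honest replicas *)
  sent : nat -> Msg -> Prop            (* messages sent so far by honest replicas *)
}.

Definition init_l : LState :=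
  {| r_vote := 0; r_cur := 1; v_cur := 0; qc_high := QCgen; mode := false;
     fvround := fun _ => 0; fvheight := fun _ => 0; fb_last := None;
     fprop2 := false; lastpropview := None |}.

Definition init_g : GState :=
  {| loc := fun _ => init_l; signed := fun _ _ => False; sent := fun _ _ => False |}.

Definition set_loc (g : GState) (i : nat) (l : LState) : GState :=
  {| loc := fun k => if k =? i then l else loc g k; signed := signed g; sent := sent g |}.
Definition add_sig (g : GState) (i : nat) (p : Payload) : GState :=
  {| loc := loc g; signed := fun k q => signed g k q \/ (k = i /\ q = p); sent := sent g |}.
Definition add_sent (g : GState) (i : nat) (m : Msg) : GState :=
  {| loc := loc g; signed := signed g; sent := fun k q => sent g k q \/ (k = i /\ q = m) |}.

(* A threshold signature on p combining t shares exists iff there are t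
   distinct replicas each of which has signed p; Byzantine replicas can
   sign anything. *)
Definition quorum (P : Params) (g : GState) (t : nat) (p : Payload) : Prop :=
  exists S : list nat, NoDup S /\ length S = t /\
    forall j, In j S -> j < n P /\ (honest P j = true -> signed g j p).

Definition coin_ok (P : Params) (g : GState) (v : nat) : Prop :=
  quorum P g (f P + 1) (PCoin v).

Definition valid_qc (P : Params) (g : GState) (q : QC) : Prop :=
  match q with
  | QCgen => True
  | QCreg id r v => quorum P g (2 * f P + 1) (PVote id r v)
  | QCf id r v h i => quorum P g (2 * f P + 1) (PFVote id r v h i)
  end.

(* QCs usable in Lock / Advance Round / as parent: regular QCs and
   endorsed f-QCs. *)
Definition usable (P : Params) (g : GState) (q : QC) : Prop :=
  match q with
  | QCf _ _ v _ i => valid_qc P g q /\ coin_ok P g v /\ elect P v = i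
  | _ => valid_qc P g q
  end.

Definition upd_l (l : LState) (rv rc vc : nat) (qh : QC) (m : bool)
  (fr fh : nat -> nat) (fl : option nat) (fp : bool) (lp : option nat) : LState :=
  {| r_vote := rv; r_cur := rc; v_cur := vc; qc_high := qh; mode := m;
     fvround := fr; fvheight := fh; fb_last := fl; fprop2 := fp; lastpropview := lp |}.

Definition lock (l : LState) (q : QC) : LState :=
  if rank_lt (qc_high l) q then
    upd_l l (r_vote l) (r_cur l) (v_cur l) q (mode l) (fvround l) (fvheight l)
          (fb_last l) (fprop2 l) (lastpropview l)
  else l.

Definition advance (l : LState) (q : QC) : LState :=
  upd_l l (r_vote l) (Nat.max (r_cur l) (qround q + 1)) (v_cur l) (qc_high l) (mode l)
        (fvround l) (fvheight l) (fb_last l) (fprop2 l) (lastpropview l).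

Definition exitfb (P : Params) (l : LState) (c : nat) : LState :=
  upd_l l (if mode l then fvround l (elect P c) else r_vote l) (r_cur l) (c + 1)
        (qc_high l) false (fvround l) (fvheight l) (fb_last l) (fprop2 l) (lastpropview l).

(* state after the pre-voting part of the Vote rule *)
Definition pre_vote (P : Params) (l : LState) (B : Block) : LState :=
  match bcoin B with
  | Some c => if v_cur l <=? c then exitfb P l c else l
  | None => advance (lock l (bqc B)) (bqc B)
  end.

Definition vote_cond (l : LState) (B : Block) : bool :=
  (bround B =? r_cur l) && (bview B =? v_cur l) && (r_vote l <? bround B) &&
  (bround B =? qround (bqc B) + 1) && rank_le (qc_high l) (bqc B) && negb (mode l).

Definition set_rvote (l : LState) (r : nat) : LState :=
  upd_l l r (r_cur l) (v_cur l) (qc_high l) (mode l) (fvround l) (fvheight l)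
        (fb_last l) (fprop2 l) (lastpropview l).

Definition upd_fun (g : nat -> nat) (j x : nat) : nat -> nat :=
  fun k => if k =? j then x else g k.

Inductive step (P : Params) : GState -> GState -> Prop :=
  (* Lock + Advance Round upon seeing a valid QC or endorsed f-QC
     (also covers valid timeout messages carrying a qc_high) *)
  | St_lock g i q :
      honest P i = true -> i < n P -> usable P g q ->
      step P g (set_loc g i (advance (lock (loc g i) q) q))
  | St_timer g i :
      honest P i = true -> i < n P ->
      let l := loc g i in
      step P g (add_sig (set_loc g i
                  (upd_l l (r_vote l) (r_cur l) (v_cur l) (qc_high l) true (fvround l)
                     (fvheight l) (fb_last l) (fprop2 l) (lastpropview l)))
                i (PTimeout (v_cur l)))
  | St_propose g i txn :
      honest P i = true -> i < n P ->
      let l := loc g i in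
      leader P (r_cur l) = i ->
      let first := match lastpropview l with Some w => negb (w =? v_cur l) | None => true end in
      let coin := if first && (0 <? v_cur l) then Some (v_cur l - 1) else None in
      step P g (add_sent (set_loc g i
                  (upd_l l (r_vote l) (r_cur l) (v_cur l) (qc_high l) (mode l) (fvround l)
                     (fvheight l) (fb_last l) (fprop2 l) (Some (v_cur l))))
                i (MProp (mkBlock (qc_high l) coin (r_cur l) (v_cur l) txn)))
  | St_vote g i B :
      honest P i = true -> i < n P ->
      (honest P (leader P (bround B)) = true -> sent g (leader P (bround B)) (MProp B)) ->
      usable P g (bqc B) ->
      (match bcoin B with Some c => coin_ok P g c | None => True end) ->
      let l1 := pre_vote P (loc g i) B in
      step P g (if vote_cond l1 B
                then add_sig (set_loc g i (set_rvote l1 (bround B))) i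
                       (PVote (hash P B) (bround B) (bview B))
                else set_loc g i l1)
  | St_exit g i c :
      honest P i = true -> i < n P -> coin_ok P g c -> v_cur (loc g i) <= c ->
      step P g (set_loc g i (exitfb P (loc g i) c))
  | St_enter g i v txn :
      honest P i = true -> i < n P ->
      quorum P g (2 * f P + 1) (PTimeout v) ->
      let l := loc g i in
      v_cur l <= v -> fb_last l <> Some v ->
      step P g (add_sent (set_loc g i
                  (upd_l l (r_vote l) (r_cur l) v (qc_high l) true (fun _ => 0) (fun _ => 0)
                     (Some v) false (lastpropview l)))
                i (MFBlk (mkBlock (qc_high l) None (qround (qc_high l) + 1) v txn) 1))
  | St_fvote g i B h j :
      honest P i = true -> i < n P -> j < n P ->
      (honest P j = true -> sent g j (MFBlk B h)) ->
      let l := loc g i in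
      fb_last l = Some (v_cur l) -> mode l = true ->
      fvheight l j < h -> bview B = v_cur l ->
      ((h = 1 /\ usable P g (bqc B) /\ rank_le (qc_high l) (bqc B) = true /\
        bround B = qround (bqc B) + 1) \/
       (h = 2 /\ exists id r' v' h' i', bqc B = QCf id r' v' h' i' /\
          valid_qc P g (bqc B) /\ bround B = r' + 1 /\ fvround l j < bround B /\
          h = h' + 1)) ->
      step P g (add_sig (set_loc g i
                  (upd_l l (r_vote l) (r_cur l) (v_cur l) (qc_high l) (mode l)
                     (upd_fun (fvround l) j (bround B)) (upd_fun (fvheight l) j h)
                     (fb_last l) (fprop2 l) (lastpropview l)))
                i (PFVote (hash P B) (bround B) (bview B) h j))
  | St_fpropose g i id r j txn :
      honest P i = true -> i < n P ->
      let l := loc g i in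
      mode l = true -> fprop2 l = false ->
      quorum P g (2 * f P + 1) (PFVote id r (v_cur l) 1 j) ->
      step P g (add_sent (set_loc g i
                  (upd_l l (r_vote l) (r_cur l) (v_cur l) (qc_high l) (mode l) (fvround l)
                     (fvheight l) (fb_last l) true (lastpropview l)))
                i (MFBlk (mkBlock (QCf id r (v_cur l) 1 j) None (r + 1) (v_cur l) txn) 2))
  | St_elect g i (S : list nat) :
      honest P i = true -> i < n P ->
      let l := loc g i in
      mode l = true -> NoDup S -> length S = 2 * f P + 1 ->
      (forall j, In j S -> j < n P /\
         exists id r, quorum P g (2 * f P + 1) (PFVote id r (v_cur l) 2 j)) ->
      step P g (add_sig g i (PCoin (v_cur l))).

Inductive reachable (P : Params) : GState -> Prop :=
  | R_init : reachable P init_g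
  | R_step g g' : reachable P g -> step P g g' -> reachable P g'.

Definition certified (P : Params) (g : GState) (B : Block) : Prop :=
  quorum P g (2 * f P + 1) (PVote (hash P B) (bround B) (bview B)).

Definition endorsed (P : Params) (g : GState) (F : FBlock) : Prop :=
  quorum P g (2 * f P + 1)
    (PFVote (hash P (fblk F)) (bround (fblk F)) (bview (fblk F)) (fheight F) (fprop F))
  /\ coin_ok P g (bview (fblk F)) /\ elect P (bview (fblk F)) = fprop F.

Definition num_byz (P : Params) : nat :=
  length (filter (fun i => negb (honest P i)) (List.seq 0 (n P))).

(** Any two quorums of 2f+1 replicas out of 3f+1, at most f of them Byzantine,
    have an honest replica in common.  So it suffices that an honest replica
    never signs two vote shares for different blocks of the same view and
    round, nor two f-vote shares for different f-blocks of the same view,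
    round and proposer.  This holds because an honest replica votes only in
    its current view, which never decreases, and only for rounds above
    [r_vote], which it then raises; f-votes are guarded in the same way by
    [fvround] and [fvheight] (fvotedround and fvotedheight in the paper),
    which are reset only upon entering a fallback of a view never entered
    before.  The endorsed case also uses that the coin-QC of a view elects a
    unique proposer. *)

From Stdlib Require Import Arith List Lia Bool.

Definition memb (S : list nat) (x : nat) : bool :=
  if in_dec Nat.eq_dec x S then true else false.

Lemma memb_spec S x : memb S x = true <-> In x S.
Proof. unfold memb; destruct (in_dec Nat.eq_dec x S); split; auto; discriminate. Qed.

Lemma length_overlap (N : nat) (S1 S2 : list nat) :
  NoDup S1 -> NoDup S2 ->
  (forall j, In j S1 -> j < N) -> (forall j, In j S2 -> j < N) ->
  length S1 + length S2 <= N + length (filter (memb S1) S2).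
Proof.
  intros N1 N2 B1 B2.
  set (Z := filter (fun x => negb (memb S1 x)) S2).
  assert (Hsplit : length (filter (memb S1) S2) + length Z = length S2)
    by apply filter_length.
  assert (HZ : length (S1 ++ Z) <= length (seq 0 N)).
  { apply NoDup_incl_length.
    - apply NoDup_app; [exact N1 | apply NoDup_filter; exact N2 |].
      intros a Ha Hz. apply filter_In in Hz as [_ Hz].
      apply negb_true_iff in Hz. apply memb_spec in Ha. congruence.
    - intros a Ha. apply in_seq. apply in_app_or in Ha as [Ha | Ha].
      + specialize (B1 a Ha); lia.
      + apply filter_In in Ha as [Ha _]. specialize (B2 a Ha); lia. }
  rewrite length_app, length_seq in HZ. lia.
Qed.

Lemma length_byzantine (P : Params) (Y : list nat) :
  NoDup Y -> (forall j, In j Y -> j < n P /\ honest P j = false) ->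
  length Y <= num_byz P.
Proof.
  intros NY HY. apply NoDup_incl_length; [exact NY |].
  intros a Ha. destruct (HY a Ha) as [Hlt Hbyz].
  apply filter_In. split.
  - apply in_seq. lia.
  - rewrite Hbyz. reflexivity.
Qed.

Lemma honest_in_overlap (P : Params) (S1 S2 : list nat) :
  NoDup S1 -> NoDup S2 ->
  (forall j, In j S1 -> j < n P) -> (forall j, In j S2 -> j < n P) ->
  n P + num_byz P < length S1 + length S2 ->
  exists j, In j S1 /\ In j S2 /\ honest P j = true.
Proof.
  intros N1 N2 B1 B2 Hlen.
  set (Y := filter (memb S1) S2).
  destruct (existsb (honest P) Y) eqn:E.
  - apply existsb_exists in E as [j [Hj Hh]].
    apply filter_In in Hj as [Hj2 Hj1]. apply memb_spec in Hj1.
    exists j; auto.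
  - exfalso.
    assert (HY : length Y <= num_byz P).
    { apply length_byzantine.
      - apply NoDup_filter; exact N2.
      - intros j Hj. split.
        + apply filter_In in Hj as [Hj _]. auto.
        + destruct (honest P j) eqn:Hh; [| reflexivity].
          assert (existsb (honest P) Y = true) by (apply existsb_exists; eauto).
          congruence. }
    pose proof (length_overlap (n P) S1 S2 N1 N2 B1 B2). subst Y. lia.
Qed.

Lemma quorums_share_honest_signer (P : Params) (g : GState) (p1 p2 : Payload) :
  n P = 3 * f P + 1 -> num_byz P <= f P ->
  quorum P g (2 * f P + 1) p1 -> quorum P g (2 * f P + 1) p2 ->
  exists j, signed g j p1 /\ signed g j p2.
Proof.
  intros Hn Hb [S1 [N1 [L1 A1]]] [S2 [N2 [L2 A2]]].
  destruct (honest_in_overlap P S1 S2 N1 N2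
              (fun j H => proj1 (A1 j H)) (fun j H => proj1 (A2 j H)))
    as [j [J1 [J2 Hj]]]; [lia |].
  exists j. split; [apply (A1 j J1) | apply (A2 j J2)]; exact Hj.
Qed.

Record vote_inv (l : LState) (s : Payload -> Prop) : Prop := {
  votes_unique : forall h1 h2 r v, s (PVote h1 r v) -> s (PVote h2 r v) -> h1 = h2;
  votes_bounded : forall h r v, s (PVote h r v) ->
    v < v_cur l \/ (v = v_cur l /\ r <= r_vote l);
  fvotes_unique : forall h1 h2 r v ht1 ht2 p,
    s (PFVote h1 r v ht1 p) -> s (PFVote h2 r v ht2 p) -> h1 = h2 /\ ht1 = ht2;
  fvotes_bounded : forall h r v ht p, s (PFVote h r v ht p) -> v < v_cur l \/
    (v = v_cur l /\ fb_last l = Some v /\ 1 <= ht <= fvheight l p /\ r <= fvround l p)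
}.

Definition is_vote (q : Payload) : bool :=
  match q with PVote _ _ _ | PFVote _ _ _ _ _ => true | _ => false end.

Lemma vote_inv_weaken l s s' :
  vote_inv l s -> (forall q, s' q -> s q \/ is_vote q = false) -> vote_inv l s'.
Proof.
  intros [U1 P1 U2 P2] H.
  assert (Hv : forall q, s' q -> is_vote q = true -> s q).
  { intros q A E. destruct (H q A) as [A' | N]; congruence. }
  constructor.
  - intros h1 h2 r v A C. exact (U1 _ _ _ _ (Hv _ A eq_refl) (Hv _ C eq_refl)).
  - intros h r v A. exact (P1 _ _ _ (Hv _ A eq_refl)).
  - intros h1 h2 r v ht1 ht2 p A C.
    exact (U2 _ _ _ _ _ _ _ (Hv _ A eq_refl) (Hv _ C eq_refl)).
  - intros h r v ht p A. exact (P2 _ _ _ _ _ (Hv _ A eq_refl)).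
Qed.

Lemma vote_inv_frame l l' s :
  vote_inv l s -> v_cur l' = v_cur l -> r_vote l <= r_vote l' ->
  fb_last l' = fb_last l -> fvround l' = fvround l -> fvheight l' = fvheight l ->
  vote_inv l' s.
Proof.
  intros [U1 P1 U2 P2] Ev Er Eb Efr Efh. constructor; auto.
  - intros h r v A. destruct (P1 _ _ _ A); lia.
  - intros h r v ht p A. rewrite Ev, Eb, Efr, Efh. exact (P2 _ _ _ _ _ A).
Qed.

Lemma vote_inv_view_lt l l' s : vote_inv l s -> v_cur l < v_cur l' -> vote_inv l' s.
Proof.
  intros [U1 P1 U2 P2] E. constructor; auto.
  - intros h r v A. destruct (P1 _ _ _ A); lia.
  - intros h r v ht p A. left. destruct (P2 _ _ _ _ _ A); lia.
Qed.

Lemma vote_inv_lock l q s : vote_inv l s -> vote_inv (lock l q) s.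
Proof.
  intros H. unfold lock. destruct rank_lt; [eapply vote_inv_frame; eauto | exact H].
Qed.

Lemma vote_inv_advance l q s : vote_inv l s -> vote_inv (advance l q) s.
Proof. intros H. eapply vote_inv_frame; eauto. Qed.

Lemma vote_inv_exitfb P l c s : vote_inv l s -> v_cur l <= c -> vote_inv (exitfb P l c) s.
Proof. intros H E. eapply vote_inv_view_lt; eauto. simpl. lia. Qed.

Lemma vote_inv_pre_vote P l B s : vote_inv l s -> vote_inv (pre_vote P l B) s.
Proof.
  intros H. unfold pre_vote. destruct (bcoin B) as [c |].
  - destruct (Nat.leb_spec (v_cur l) c); auto. apply vote_inv_exitfb; auto.
  - apply vote_inv_advance, vote_inv_lock, H.
Qed.

(* The f-vote guards may be reset: f-votes of the current view are only signed
   while [fb_last] records that view, so none of view [v] exists yet. *)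
Lemma vote_inv_enter l s v :
  vote_inv l s -> v_cur l <= v -> fb_last l <> Some v ->
  vote_inv (upd_l l (r_vote l) (r_cur l) v (qc_high l) true (fun _ => 0) (fun _ => 0)
              (Some v) false (lastpropview l)) s.
Proof.
  intros [U1 P1 U2 P2] Ev Eb. constructor; auto; simpl.
  - intros h r w A. destruct (P1 _ _ _ A) as [? | [? ?]]; [lia |].
    destruct (Nat.eq_dec (v_cur l) v); [right | left]; lia.
  - intros h r w ht p A. left.
    destruct (P2 _ _ _ _ _ A) as [? | [-> [Hb _]]]; [lia |].
    destruct (Nat.eq_dec (v_cur l) v) as [E |]; [rewrite E in Hb; congruence | lia].
Qed.

Lemma vote_inv_vote l s x B :
  vote_inv l s -> vote_cond l B = true ->
  vote_inv (set_rvote l (bround B)) (fun q => s q \/ q = PVote x (bround B) (bview B)).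
Proof.
  intros [U1 P1 U2 P2] V. unfold vote_cond in V.
  repeat rewrite andb_true_iff in V. destruct V as [[[[[_ Hv] Hr] _] _] _].
  apply Nat.eqb_eq in Hv. apply Nat.ltb_lt in Hr.
  constructor; simpl.
  - intros h1 h2 r v [A | A] [C | C].
    + eauto.
    + injection C as -> -> ->. destruct (P1 _ _ _ A); lia.
    + injection A as -> -> ->. destruct (P1 _ _ _ C); lia.
    + congruence.
  - intros h r v [A | A].
    + destruct (P1 _ _ _ A); lia.
    + injection A as -> -> ->. right. lia.
  - intros h1 h2 r v ht1 ht2 p [A | A] [C | C]; try discriminate. eauto.
  - intros h r v ht p [A | A]; [exact (P2 _ _ _ _ _ A) | discriminate].
Qed.

(* A second f-vote for proposer [j] in the current view must be of height 2,
   hence of a round above every earlier f-vote for [j]. *)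
Lemma vote_inv_fvote l s x r h j :
  vote_inv l s -> fb_last l = Some (v_cur l) ->
  fvheight l j < h -> 1 <= h <= 2 -> (h = 2 -> fvround l j < r) ->
  vote_inv (upd_l l (r_vote l) (r_cur l) (v_cur l) (qc_high l) (mode l)
              (upd_fun (fvround l) j r) (upd_fun (fvheight l) j h)
              (fb_last l) (fprop2 l) (lastpropview l))
           (fun q => s q \/ q = PFVote x r (v_cur l) h j).
Proof.
  intros [U1 P1 U2 P2] Hb Hh H12 Hr.
  assert (Hold : forall x' r' ht', s (PFVote x' r' (v_cur l) ht' j) -> r' < r).
  { intros x' r' ht' A. destruct (P2 _ _ _ _ _ A) as [? | [_ [_ [? ?]]]]; [lia |].
    assert (h = 2) as E by lia. specialize (Hr E). lia. }
  constructor; simpl.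
  - intros h1 h2 r' v [A | A] [C | C]; try discriminate. eauto.
  - intros h' r' v [A | A]; [exact (P1 _ _ _ A) | discriminate].
  - intros h1 h2 r' v ht1 ht2 p [A | A] [C | C].
    + eauto.
    + injection C as -> -> -> -> ->. apply Hold in A. lia.
    + injection A as -> -> -> -> ->. apply Hold in C. lia.
    + split; congruence.
  - intros h' r' v ht p [A | A]; unfold upd_fun.
    + destruct (P2 _ _ _ _ _ A) as [? | [? [? [? ?]]]]; [left; lia | right].
      destruct (Nat.eqb_spec p j) as [-> |]; [specialize (Hr ltac:(lia)) |];
        repeat split; auto; lia.
    + injection A as -> -> -> -> ->. right. rewrite Nat.eqb_refl.
      repeat split; auto; lia.
Qed.

Definition state_inv (g : GState) : Prop := forall j, vote_inv (loc g j) (signed g j).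

Lemma loc_set_loc_same g i l : loc (set_loc g i l) i = l.
Proof. simpl. rewrite Nat.eqb_refl. reflexivity. Qed.

Lemma state_inv_set_loc g i l :
  state_inv g -> vote_inv l (signed g i) -> state_inv (set_loc g i l).
Proof. intros Hg Hl j. simpl. destruct (Nat.eqb_spec j i) as [-> |]; auto. Qed.

Lemma state_inv_add_sig g i p :
  state_inv g -> vote_inv (loc g i) (fun q => signed g i q \/ q = p) ->
  state_inv (add_sig g i p).
Proof.
  intros Hg Hi j. simpl. destruct (Nat.eq_dec j i) as [-> | Hji].
  - apply (vote_inv_weaken _ _ _ Hi). intros q [A | [_ A]]; auto.
  - apply (vote_inv_weaken _ _ _ (Hg j)). intros q [A | [E _]]; [auto | congruence].
Qed.

Lemma state_inv_set_loc_add_sig g i l p :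
  state_inv g -> vote_inv l (fun q => signed g i q \/ q = p) ->
  state_inv (add_sig (set_loc g i l) i p).
Proof.
  intros Hg Hl. apply state_inv_add_sig.
  - apply state_inv_set_loc; [exact Hg |].
    apply (vote_inv_weaken _ _ _ Hl). auto.
  - rewrite loc_set_loc_same. exact Hl.
Qed.

Lemma vote_inv_add_non_vote l s p :
  vote_inv l s -> is_vote p = false -> vote_inv l (fun q => s q \/ q = p).
Proof. intros H Hp. apply (vote_inv_weaken _ _ _ H). intros q [A | ->]; auto. Qed.

Lemma state_inv_step P g g' : step P g g' -> state_inv g -> state_inv g'.
Proof.
  intros S Hg.
  destruct S as [| | | g i B ? ? ? ? ? l1 | | g i v ? ? ? ? l Hv Hfb
                 | g i B h j ? ? ? ? l Hfb ? Hht Hview Hcond | |].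
  - apply state_inv_set_loc; [exact Hg |]. apply vote_inv_advance, vote_inv_lock, Hg.
  - apply state_inv_set_loc_add_sig; [exact Hg |].
    apply vote_inv_add_non_vote; [| reflexivity].
    eapply vote_inv_frame; [apply Hg | ..]; reflexivity.
  - apply state_inv_set_loc; [exact Hg |].
    eapply vote_inv_frame; [apply Hg | ..]; reflexivity.
  - subst l1. destruct (vote_cond (pre_vote P (loc g i) B) B) eqn:V.
    + apply state_inv_set_loc_add_sig; [exact Hg |].
      apply vote_inv_vote; [apply vote_inv_pre_vote, Hg | exact V].
    + apply state_inv_set_loc; [exact Hg |]. apply vote_inv_pre_vote, Hg.
  - apply state_inv_set_loc; [exact Hg |]. apply vote_inv_exitfb; [apply Hg | assumption].
  - apply state_inv_set_loc; [exact Hg |].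
    apply vote_inv_enter; [apply Hg | exact Hv | exact Hfb].
  - subst l. apply state_inv_set_loc_add_sig; [exact Hg |]. rewrite Hview.
    assert (Hh : 1 <= h <= 2 /\ (h = 2 -> fvround (loc g i) j < bround B)).
    { destruct Hcond as [[-> _] | [-> [id [r' [v' [h' [i' [_ [_ [_ [? _]]]]]]]]]]];
        split; intros; lia. }
    apply vote_inv_fvote; [apply Hg | exact Hfb | exact Hht | apply Hh ..].
  - apply state_inv_set_loc; [exact Hg |].
    eapply vote_inv_frame; [apply Hg | ..]; reflexivity.
  - apply state_inv_add_sig; [exact Hg |].
    apply vote_inv_add_non_vote; [apply Hg | reflexivity].
Qed.

Lemma state_inv_reachable P g : reachable P g -> state_inv g.
Proof.
  induction 1 as [| g g' _ IH S].
  - intros j. constructor; simpl; contradiction.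
  - exact (state_inv_step P g g' S IH).
Qed.

Section Uniqueness.

Variables (P : Params) (g : GState).
Hypothesis n_eq : n P = 3 * f P + 1.
Hypothesis byz_le : num_byz P <= f P.
Hypothesis hash_inj : forall B1 B2 : Block, hash P B1 = hash P B2 -> B1 = B2.
Hypothesis g_reachable : reachable P g.

Lemma certified_unique (B1 B2 : Block) :
  certified P g B1 -> certified P g B2 ->
  bview B1 = bview B2 -> bround B1 = bround B2 -> B1 = B2.
Proof.
  intros C1 C2 Hv Hr. unfold certified in C2. rewrite <- Hv, <- Hr in C2.
  destruct (quorums_share_honest_signer P g _ _ n_eq byz_le C1 C2) as [j [S1 S2]].
  apply hash_inj.
  exact (votes_unique _ _ (state_inv_reachable P g g_reachable j) _ _ _ _ S1 S2).
Qed.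

Lemma endorsed_unique (F1 F2 : FBlock) :
  endorsed P g F1 -> endorsed P g F2 ->
  bview (fblk F1) = bview (fblk F2) -> bround (fblk F1) = bround (fblk F2) -> F1 = F2.
Proof.
  intros [Q1 [_ E1]] [Q2 [_ E2]] Hv Hr.
  rewrite <- Hv, <- Hr, <- E2, <- Hv, E1 in Q2.
  destruct (quorums_share_honest_signer P g _ _ n_eq byz_le Q1 Q2) as [j [S1 S2]].
  destruct (fvotes_unique _ _ (state_inv_reachable P g g_reachable j) _ _ _ _ _ _ _ S1 S2)
    as [Hh Ht].
  apply hash_inj in Hh.
  destruct F1, F2; simpl in *; congruence.
Qed.

End Uniqueness.

Theorem lemma8 (P : Params) (g : GState) :
  n P = 3 * f P + 1 ->
  num_byz P <= f P ->
  (forall r, leader P r < n P) ->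
  (forall v, elect P v < n P) ->
  (forall B1 B2 : Block, hash P B1 = hash P B2 -> B1 = B2) ->
  reachable P g ->
  (forall F1 F2 : FBlock,
     endorsed P g F1 -> endorsed P g F2 ->
     bview (fblk F1) = bview (fblk F2) -> bround (fblk F1) = bround (fblk F2) ->
     F1 = F2) /\
  (forall B1 B2 : Block,
     certified P g B1 -> certified P g B2 ->
     bview B1 = bview B2 -> bround B1 = bround B2 ->
     B1 = B2).
Proof.
  intros Hn Hb _ _ Hinj R. split.
  - exact (endorsed_unique P g Hn Hb Hinj R).
  - exact (certified_unique P g Hn Hb Hinj R).
Qed.
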